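(* Let $(\alpha,\beta)\in(0,\infty)^2$ with $\nabla I(\alpha,\beta)=0$. Then $I(\alpha,\beta)<\sqrt{\pi/2}$.
   Context: For $\alpha,\beta\ge 0$ define $I(\alpha,\beta)=\exp\left(-\frac{\alpha\beta}{2}\right)\int_{-\alpha}^{\beta}\exp\left(-\frac{\sigma^2}{2}\right)d\sigma$. *)

From Stdlib Require Import Reals.
From Coquelicot Require Import Coquelicot.
Open Scope R_scope.

Definition I (a b : R) : R :=
  exp (- (a * b) / 2) * RInt (fun s => exp (- (s ^ 2) / 2)) (- a) b.

From Stdlib Require Import Reals Lra Psatz.
From Coquelicot Require Import Coquelicot.
Open Scope R_scope.

(* Write F = ∫_{-a}^{b} φ with φ(s) = exp(-s²/2), so that I = exp(-ab/2) F.  At a critical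
   point the partial derivatives give φ(a) = bF/2 and φ(b) = aF/2, i.e.
   a I = 2 exp(-b(a+b)/2) and b I = 2 exp(-a(a+b)/2).  If I were at least
   c₀ = 1.22 ≤ √(π/2), then exp(-X)(1+X) ≤ 1 would give c₀ a (1 + b(a+b)/2) ≤ 2 and
   c₀ b (1 + a(a+b)/2) ≤ 2, while exp(ab/2) ≥ 1 + ab/2 and the Taylor bound
   φ(t) ≤ 1 - t²/2 + t⁴/8 would give c₀ (1 + ab/2) ≤ F ≤ Φ₄(a) + Φ₄(b) with
   Φ₄(t) = t - t³/6 + t⁵/40.  These three polynomial inequalities are incompatible:
   in the variables s = a + b and p = ab the last one reads gap(s, p) ≥ 0, where gap is
   decreasing in p on [0, s²/4], and gap(s, p₀) < 0 for a lower bound p₀ of p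
   (p₀ = 0 when s is small, p₀ = 2s/c₀ - 4/c₀² from (2/c₀ - a)(2/c₀ - b) ≥ 0 otherwise). *)

Definition c0 : R := 122 / 100.

Definition Phi4 (t : R) : R := t - t ^ 3 / 6 + t ^ 5 / 40.

Definition gap (s p : R) : R :=
  s - s ^ 3 / 6 + s ^ 5 / 40 - c0 + p * (s / 2 - s ^ 3 / 8 - c0 / 2) + p ^ 2 * s / 8.

Lemma gap_sum_prod (a b : R) :
  gap (a + b) (a * b) = Phi4 a + Phi4 b - c0 * (1 + a * b / 2).
Proof. unfold gap, Phi4. field. Qed.

Lemma gap_small_s (s : R) : 0 < s -> s <= 164 / 100 -> gap s 0 < 0.
Proof.
  intros hs hs'. unfold gap, c0.
  assert (s ^ 5 / 40 <= s ^ 3 * ((164 / 100) ^ 2 / 40)).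
  { assert (s ^ 2 <= (164 / 100) ^ 2) by nra.
    assert (0 <= s ^ 3) by (apply pow_le; lra).
    replace (s ^ 5) with (s ^ 3 * s ^ 2) by ring. nra. }
  assert (s - s ^ 3 * (1 / 6 - (164 / 100) ^ 2 / 40)
          <= 164 / 100 - (164 / 100) ^ 3 * (1 / 6 - (164 / 100) ^ 2 / 40)).
  { assert (s * s <= 164 / 100 * 164 / 100) by nra.
    assert (0 <= 164 / 100 * s) by nra.
    nra. }
  lra.
Qed.

Definition p_min (s : R) : R := 2 * s / c0 - 4 / c0 ^ 2.

Lemma gap_large_s (s : R) :
  164 / 100 <= s -> c0 * s * (1 + p_min s) <= 4 -> gap s (p_min s) < 0.
Proof.
  intros hs Hsum. unfold gap, p_min, c0 in *.
  assert (s <= 204 / 100) by nra.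
  set (t := s - 164 / 100). replace s with (t + 164 / 100) by (unfold t; ring).
  assert (0 <= t <= 2 / 5) by (unfold t; lra). clearbody t.
  assert (0 <= t ^ 2) by nra.
  assert (0 <= t ^ 3) by (apply pow_le; lra).
  assert (t ^ 4 <= 2 / 5 * t ^ 3) by (replace (t ^ 4) with (t ^ 3 * t) by ring; nra).
  assert (t ^ 5 <= 4 / 25 * t ^ 3) by (replace (t ^ 5) with (t ^ 3 * (t * t)) by ring; nra).
  nra.
Qed.

Lemma gap_slope_neg (s q : R) :
  0 < s -> q <= s ^ 2 / 2 -> s / 2 - s ^ 3 / 8 - c0 / 2 + q * s / 8 < 0.
Proof.
  intros hs hq. unfold c0.
  assert (q * s <= s ^ 3 / 2) by (replace (s ^ 3) with (s ^ 2 * s) by ring; nra).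
  assert (s / 2 - s ^ 3 / 16 < 61 / 100).
  { destruct (Rle_lt_dec s 4).
    - assert (0 <= (s - 8 / 5) ^ 2 * (s + 16 / 5))
        by (apply Rmult_le_pos; [apply pow2_ge_0 | lra]).
      assert (s ^ 3 - 768 / 100 * s + 8192 / 1000 = (s - 8 / 5) ^ 2 * (s + 16 / 5)) by field.
      lra.
    - assert (16 * s <= s ^ 3) by (replace (s ^ 3) with (s * s * s) by ring; nra).
      lra. }
  lra.
Qed.

Lemma gap_antitone (s p q : R) : 0 < s -> q <= p -> p + q <= s ^ 2 / 2 -> gap s p <= gap s q.
Proof.
  intros hs hqp hpq.
  assert (gap s p - gap s q = (p - q) * (s / 2 - s ^ 3 / 8 - c0 / 2 + (p + q) * s / 8))
    by (unfold gap; field).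
  pose proof (gap_slope_neg s (p + q) hs hpq).
  nra.
Qed.

Lemma critical_bounds_incompatible (a b : R) : 0 < a -> 0 < b ->
  c0 * a * (1 + b * (a + b) / 2) <= 2 ->
  c0 * b * (1 + a * (a + b) / 2) <= 2 ->
  c0 * (1 + a * b / 2) <= Phi4 a + Phi4 b -> False.
Proof.
  intros ha hb HA HB HC.
  assert (Hgap : 0 <= gap (a + b) (a * b)) by (rewrite gap_sum_prod; lra).
  assert (Hp : 4 * (a * b) <= (a + b) ^ 2) by (pose proof (pow2_ge_0 (a - b)); nra).
  assert (Hs : 0 < a + b) by lra.
  assert (Hp0 : 0 < a * b) by nra.
  assert (HS : c0 * (a + b) * (1 + a * b) <= 4).
  { assert (c0 * (a + b) * (1 + a * b)
            = c0 * a * (1 + b * (a + b) / 2) + c0 * b * (1 + a * (a + b) / 2)) by field.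
    lra. }
  set (s := a + b) in *. set (p := a * b) in *.
  destruct (Rle_lt_dec s (164 / 100)) as [hs | hs].
  - pose proof (gap_small_s s Hs hs).
    pose proof (gap_antitone s p 0 Hs ltac:(lra) ltac:(lra)).
    lra.
  - assert (Ha : c0 * a <= 2) by (assert (0 <= a * (b * s)) by (unfold s; nra); unfold c0 in *; nra).
    assert (Hb : c0 * b <= 2) by (assert (0 <= b * (a * s)) by (unfold s; nra); unfold c0 in *; nra).
    assert (Hpmin : p_min s <= p).
    { assert (0 <= (2 / c0 - a) * (2 / c0 - b)) by (apply Rmult_le_pos; unfold c0 in *; lra).
      unfold s, p, p_min, c0 in *. nra. }
    assert (Hsum : c0 * s * (1 + p_min s) <= 4)
      by (assert (0 < c0 * s) by (unfold c0; lra); nra).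
    assert (Hpsum : p + p_min s <= s ^ 2 / 2) by lra.
    pose proof (gap_large_s s ltac:(lra) Hsum).
    pose proof (gap_antitone s p (p_min s) Hs Hpmin Hpsum).
    lra.
Qed.

Lemma c0_le_sqrt_PI2 : c0 <= sqrt (PI / 2).
Proof.
  pose proof PI2_3_2.
  rewrite <- (sqrt_Rsqr c0) by (unfold c0; lra).
  apply sqrt_le_1_alt. unfold Rsqr, c0. lra.
Qed.

Lemma exp_neg_le_taylor2 (x : R) : 0 <= x -> exp (- x) <= 1 - x + x ^ 2 / 2.
Proof.
  intros hx.
  set (f := fun y => exp (- y) - (1 - y + y ^ 2 / 2)).
  assert (Hd : forall y, is_derive f y (- exp (- y) + 1 - y)).
  { intros y. unfold f. auto_derive; [easy | field]. }
  destruct (Req_dec x 0) as [-> | hx0].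
  { rewrite Ropp_0, exp_0. lra. }
  destruct (MVT_gen f 0 x (fun y => - exp (- y) + 1 - y)) as [t [ht Hmvt]].
  { intros; apply Hd. }
  { intros. apply continuity_pt_filterlim, (@ex_derive_continuous R_AbsRing R_NormedModule).
    eexists; apply Hd. }
  rewrite Rmin_left in ht by lra. rewrite Rmax_right in ht by lra.
  pose proof (exp_ineq1_le (- t)).
  assert (f x - f 0 <= 0) by (rewrite Hmvt; nra).
  unfold f in *. rewrite Ropp_0, exp_0 in *. lra.
Qed.

Lemma exp_neg_mul_1p_le (X : R) : 0 <= X -> exp (- X) * (1 + X) <= 1.
Proof.
  intros hX.
  pose proof (exp_ineq1_le X). pose proof (exp_pos (- X)).
  assert (exp (- X) * exp X = 1)
    by (rewrite <- exp_plus; replace (- X + X) with 0 by ring; apply exp_0).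
  nra.
Qed.

Definition phi (s : R) : R := exp (- (s ^ 2) / 2).

Lemma is_derive_phi (x : R) : is_derive phi x (- x * phi x).
Proof.
  unfold phi. auto_derive; [easy |].
  replace (- (x * (x * 1)) * / 2) with (- x ^ 2 / 2) by field. field.
Qed.

Lemma continuous_phi (x : R) : continuous phi x.
Proof.
  apply (@ex_derive_continuous R_AbsRing R_NormedModule).
  eexists. apply is_derive_phi.
Qed.

Lemma ex_RInt_phi (u v : R) : ex_RInt phi u v.
Proof. apply (@ex_RInt_continuous R_CompleteNormedModule). intros; apply continuous_phi. Qed.

Lemma phi_opp (x : R) : phi (- x) = phi x.
Proof. unfold phi. replace ((- x) ^ 2) with (x ^ 2) by ring. reflexivity. Qed.

Lemma RInt_phi_le_Phi4 (a b : R) : 0 <= a -> 0 <= b -> RInt phi (- a) b <= Phi4 a + Phi4 b.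
Proof.
  intros ha hb.
  assert (Hpoly : is_RInt (fun t => 1 - t ^ 2 / 2 + t ^ 4 / 8) (- a) b
                    (minus (Phi4 b) (Phi4 (- a)))).
  { apply (@is_RInt_derive R_CompleteNormedModule).
    - intros. unfold Phi4. auto_derive; [easy | field].
    - intros. apply (@ex_derive_continuous R_AbsRing R_NormedModule). auto_derive. easy. }
  apply (@is_RInt_unique R_CompleteNormedModule) in Hpoly.
  replace (Phi4 a + Phi4 b) with (minus (Phi4 b) (Phi4 (- a)))
    by (unfold minus, plus, opp, Phi4; simpl; field).
  rewrite <- Hpoly.
  apply RInt_le; [lra | apply ex_RInt_phi | |].
  - apply (@ex_RInt_continuous R_CompleteNormedModule). intros.
    apply (@ex_derive_continuous R_AbsRing R_NormedModule). auto_derive. easy.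
  - intros t _. unfold phi.
    replace (- t ^ 2 / 2) with (- (t ^ 2 / 2)) by field.
    pose proof (exp_neg_le_taylor2 (t ^ 2 / 2) ltac:(nra)). nra.
Qed.

Lemma I_mul_exp (a b : R) : I a b * exp (a * b / 2) = RInt phi (- a) b.
Proof.
  unfold I. fold phi.
  replace (exp (- (a * b) / 2) * RInt phi (- a) b * exp (a * b / 2))
    with (exp (- (a * b) / 2 + a * b / 2) * RInt phi (- a) b) by (rewrite exp_plus; ring).
  replace (- (a * b) / 2 + a * b / 2) with 0 by field.
  rewrite exp_0. ring.
Qed.

Lemma is_derive_I_r (a b : R) : is_derive (fun y => I a y) b
  (exp (- (a * b) / 2) * (phi b - a / 2 * RInt phi (- a) b)).
Proof.
  assert (Hexp : is_derive (fun y => exp (- (a * y) / 2)) b (exp (- (a * b) / 2) * (- a / 2))).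
  { auto_derive; [easy |].
    replace (- (a * b) * / 2) with (- (a * b) / 2) by field. field. }
  assert (Hint : is_derive (RInt phi (- a)) b (phi b)).
  { apply (@is_derive_RInt R_NormedModule phi (RInt phi (- a)) (- a) b).
    - apply filter_forall. intros. apply (@RInt_correct R_CompleteNormedModule), ex_RInt_phi.
    - apply continuous_phi. }
  replace (exp (- (a * b) / 2) * (phi b - a / 2 * RInt phi (- a) b))
    with (exp (- (a * b) / 2) * (- a / 2) * RInt phi (- a) b + exp (- (a * b) / 2) * phi b)
    by field.
  eapply is_derive_ext.
  { intros y. unfold I. fold phi. reflexivity. }
  exact (is_derive_mult _ _ b _ _ Hexp Hint Rmult_comm).
Qed.

Lemma is_derive_I_l (a b : R) : is_derive (fun x => I x b) a
  (exp (- (a * b) / 2) * (phi a - b / 2 * RInt phi (- a) b)).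
Proof.
  assert (Hexp : is_derive (fun x => exp (- (x * b) / 2)) a (exp (- (a * b) / 2) * (- b / 2))).
  { auto_derive; [easy |].
    replace (- (a * b) * / 2) with (- (a * b) / 2) by field. field. }
  assert (Hlow : is_derive (fun u => RInt phi u b) (- a) (opp (phi (- a)))).
  { apply (@is_derive_RInt' R_NormedModule phi (fun u => RInt phi u b) (- a) b).
    - apply filter_forall. intros. apply (@RInt_correct R_CompleteNormedModule), ex_RInt_phi.
    - apply continuous_phi. }
  assert (Hopp : is_derive (fun x : R => - x) a (-1)) by (auto_derive; [easy | ring]).
  assert (Hint : is_derive (fun x => RInt phi (- x) b) a (phi a)).
  { replace (phi a) with (scal (-1) (opp (phi (- a))))
      by (rewrite phi_opp; unfold scal, opp; simpl; unfold mult; simpl; ring).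
    exact (is_derive_comp (fun u => RInt phi u b) (fun x => - x) a _ _ Hlow Hopp). }
  replace (exp (- (a * b) / 2) * (phi a - b / 2 * RInt phi (- a) b))
    with (exp (- (a * b) / 2) * (- b / 2) * RInt phi (- a) b + exp (- (a * b) / 2) * phi a)
    by field.
  eapply is_derive_ext.
  { intros x. unfold I. fold phi. reflexivity. }
  exact (is_derive_mult _ _ a _ _ Hexp Hint Rmult_comm).
Qed.

Lemma mul_I_eq_exp (a b x y : R) :
  phi y = x / 2 * RInt phi (- a) b -> x * I a b = 2 * exp (- (a * b) / 2 - y ^ 2 / 2).
Proof.
  intros Hcrit. unfold I. fold phi.
  replace (x * (exp (- (a * b) / 2) * RInt phi (- a) b))
    with (2 * exp (- (a * b) / 2) * (x / 2 * RInt phi (- a) b)) by field.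
  rewrite <- Hcrit. unfold phi.
  rewrite Rmult_assoc, <- exp_plus. do 2 f_equal. field.
Qed.

Lemma I_critical_r (a b : R) :
  is_derive (fun y => I a y) b 0 -> a * I a b = 2 * exp (- (b * (a + b) / 2)).
Proof.
  intros hdb.
  pose proof (is_derive_unique _ _ _ hdb) as E.
  rewrite (is_derive_unique _ _ _ (is_derive_I_r a b)) in E.
  rewrite (mul_I_eq_exp a b a b).
  - do 2 f_equal. field.
  - pose proof (exp_pos (- (a * b) / 2)). nra.
Qed.

Lemma I_critical_l (a b : R) :
  is_derive (fun x => I x b) a 0 -> b * I a b = 2 * exp (- (a * (a + b) / 2)).
Proof.
  intros hda.
  pose proof (is_derive_unique _ _ _ hda) as E.
  rewrite (is_derive_unique _ _ _ (is_derive_I_l a b)) in E.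
  rewrite (mul_I_eq_exp a b b a).
  - do 2 f_equal. field.
  - pose proof (exp_pos (- (a * b) / 2)). nra.
Qed.

Lemma c0_bound_of_mul_eq_exp (x X J : R) : 0 < x -> 0 <= X -> c0 <= J ->
  x * J = 2 * exp (- X) -> c0 * x * (1 + X) <= 2.
Proof.
  intros hx hX hJ E.
  pose proof (exp_neg_mul_1p_le X hX).
  assert (c0 * x * (1 + X) <= x * J * (1 + X)) by (apply Rmult_le_compat_r; nra).
  nra.
Qed.

Theorem lemma3p5 (a b : R) (ha : 0 < a) (hb : 0 < b)
  (hda : is_derive (fun x => I x b) a 0)
  (hdb : is_derive (fun y => I a y) b 0) :
  I a b < sqrt (PI / 2).
Proof.
  apply Rnot_le_lt. intros Hge.
  assert (HI : c0 <= I a b) by (pose proof c0_le_sqrt_PI2; lra).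
  apply (critical_bounds_incompatible a b ha hb).
  - apply (c0_bound_of_mul_eq_exp a _ (I a b)); [lra | nra | lra | exact (I_critical_r a b hdb)].
  - apply (c0_bound_of_mul_eq_exp b _ (I a b)); [lra | nra | lra | exact (I_critical_l a b hda)].
  - rewrite <- RInt_phi_le_Phi4 by lra.
    rewrite <- I_mul_exp.
    pose proof (exp_ineq1_le (a * b / 2)).
    apply Rmult_le_compat; unfold c0 in *; nra.
Qed.
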